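(* Fix integers $N\ge 2$ and $b_0\ge 1$ and a real number $m>1$, and set $q_k = 2/(2b_0 m^k-1)$ for $k\ge 0$. For each $K\in\{1,2,\dots\}$, let $\gamma=\gamma(K)\in(0,1)$ denote the solution of the fixed point equations $$\bar p=\frac{\sum_{k=0}^{K}\gamma^k}{\sum_{k=0}^{K}\gamma^k/q_k},\qquad \gamma=1-e^{-(N-1)\bar p}.$$ Then there exists a finite $K_0$ such that $\gamma(K_0)<1/m$, and $\gamma(K)$ is decreasing in $K$ for $K\ge K_0$. Consequently: (i) there exists $K_0$ such that $\gamma<1/m$ for all $K\ge K_0$, including $K=\infty$ (where $\gamma$ for $K=\infty$ is the limit of $\gamma(K)$ as $K\to\infty$); (ii) for $K=\infty$ the mean $\bar\Omega=\mathbb{E}[\Omega]=\sum_{k=0}^{\infty}\gamma^k/q_k$ of the per-packet backoff is finite.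
   Context: This models the backoff of IEEE 802.11 with $N$ saturated nodes, backoff stages $0,\dots,K$, multiplicative factor $m$ and initial contention window $2b_0$; $q_k$ is the attempt probability in stage $k$, $\bar p$ the average attempt rate and $\gamma$ the collision probability. The per-packet backoff is $\Omega=\sum_{k=0}^{\kappa}B_k$, where $B_k$ is the backoff value drawn at stage $k$ (mean $1/q_k$) and $\kappa$ is the highest stage reached by the packet, with $\mathbb{P}[\kappa=k]=\gamma^k-\gamma^{k+1}$ for $k<K$ and $\mathbb{P}[\kappa=K]=\gamma^K$; its mean is $\bar\Omega=\sum_{k=0}^{K}\gamma^k/q_k$. *)

From Stdlib Require Import Reals.
From Coquelicot Require Import Coquelicot.
Open Scope R_scope.

(* q_k = 2 / (2 b0 m^k - 1): attempt probability in backoff stage k *)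
Definition q (b0 : nat) (m : R) (k : nat) : R :=
  2 / (2 * INR b0 * m ^ k - 1).

(* average attempt rate pbar = (sum_{k=0}^K g^k) / (sum_{k=0}^K g^k / q_k)
   (sum_f_R0 f K = f 0 + ... + f K) *)
Definition pbar (b0 : nat) (m : R) (K : nat) (g : R) : R :=
  sum_f_R0 (fun k => g ^ k) K / sum_f_R0 (fun k => g ^ k / q b0 m k) K.

Definition is_fixed_point (N b0 : nat) (m : R) (K : nat) (g : R) : Prop :=
  0 < g < 1 /\ g = 1 - exp (- (INR N - 1) * pbar b0 m K g).

(* Write pbar = A_K(g) / D_K(g) with A_K(g) = sum_{k<=K} g^k and D_K(g) = sum_{k<=K} g^k / q_k,
   where 1 / q_k = b0 m^k - 1/2 is strictly increasing in k.  The ratio A_K / D_K is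
   nonincreasing in g, and appending the term k = K+1, whose weight exceeds all previous ones,
   strictly lowers it.  Hence gamma(K+1) >= gamma(K) would force pbar to drop from K to K+1,
   and with it the collision probability: gamma(K+1) < gamma(K), a contradiction.

   Since 1 / q_k >= 1/2 we have pbar <= 2, so 1 - g >= e^{-2(N-1)} and A_K(g) <= e^{2(N-1)}.
   If g >= 1/m, every term of D_K(g) is at least 1/2, and g <= (N-1) pbar
   <= 2 (N-1) e^{2(N-1)} / (K+1), which fails for K large.  The limit of the eventually
   decreasing sequence is then below 1/m, and sum_k g^k / q_k splits into two convergent
   geometric series. *)

From Stdlib Require Import Reals Lra Lia Psatz.
From Coquelicot Require Import Coquelicot.
Open Scope R_scope.

Definition geom_sum (K : nat) (g : R) : R := sum_f_R0 (fun k => g ^ k) K.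

Definition weighted_sum (w : nat -> R) (K : nat) (g : R) : R :=
  sum_f_R0 (fun k => g ^ k * w k) K.

Lemma geom_sum_pos K g : 0 < g -> 0 < geom_sum K g.
Proof. intros Hg. apply tech1. intros k _. now apply pow_lt. Qed.

Lemma geom_sum_le_inv K g : 0 < g < 1 -> geom_sum K g <= / (1 - g).
Proof.
  intros Hg. pose proof (GP_finite g K) as GP. fold (geom_sum K g) in GP.
  assert (0 < g ^ (K + 1)) by (apply pow_lt; lra).
  apply (Rmult_le_reg_r (1 - g)); [lra|]. rewrite Rinv_l by lra. lra.
Qed.

Section WeightedSums.

Variable w : nat -> R.
Hypothesis w_pos : forall k, 0 < w k.
Hypothesis w_lt : forall i j, (i < j)%nat -> w i < w j.

Lemma w_le i j : (i <= j)%nat -> w i <= w j.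
Proof.
  intros Hij. destruct (Nat.eq_dec i j) as [->|Hne]; [lra|].
  apply Rlt_le, w_lt. lia.
Qed.

Lemma weighted_sum_pos K g : 0 < g -> 0 < weighted_sum w K g.
Proof.
  intros Hg. apply tech1. intros k _.
  apply Rmult_lt_0_compat; [now apply pow_lt | apply w_pos].
Qed.

Lemma weighted_sum_lt_geom_sum_mul K g c : 0 < g ->
  (forall k, (k <= K)%nat -> w k < c) -> weighted_sum w K g < geom_sum K g * c.
Proof.
  intros Hg Hc. unfold weighted_sum, geom_sum. induction K as [|K IH]; simpl.
  - specialize (Hc 0%nat (le_n 0)). lra.
  - assert (IH' := IH ltac:(intros k Hk; apply Hc; lia)).
    assert (Hw := Hc (S K) (le_n _)).
    assert (0 < g * g ^ K) by (apply Rmult_lt_0_compat; [lra | now apply pow_lt]).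
    nra.
Qed.

(* Appending the index-n term changes the cross product A(g) D(g') - A(g') D(g) by a sum
   whose terms are all nonnegative when w is increasing and g <= g'. *)
Lemma geom_weighted_cross_step n L g g' :
  g ^ n * weighted_sum w L g' + g' ^ n * w n * geom_sum L g
  - (g' ^ n * weighted_sum w L g + g ^ n * w n * geom_sum L g')
  = sum_f_R0 (fun j => (w n - w j) * (g' ^ n * g ^ j - g ^ n * g' ^ j)) L.
Proof.
  unfold weighted_sum, geom_sum. induction L as [|L IH]; simpl; [ring|].
  rewrite <- IH. ring.
Qed.

Lemma pow_cross_le n j g g' : 0 < g <= g' -> (j <= n)%nat ->
  g ^ n * g' ^ j <= g' ^ n * g ^ j.
Proof.
  intros Hg Hjn. replace n with ((n - j) + j)%nat by lia. rewrite !pow_add.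
  assert (g ^ (n - j) <= g' ^ (n - j)) by (apply pow_incr; lra).
  assert (0 <= g ^ j * g' ^ j) by (apply Rmult_le_pos; apply pow_le; lra).
  nra.
Qed.

Lemma cross_term_nonneg n j g g' : 0 < g <= g' ->
  0 <= (w n - w j) * (g' ^ n * g ^ j - g ^ n * g' ^ j).
Proof.
  intros Hg. destruct (Nat.le_gt_cases j n) as [Hjn|Hnj].
  - apply Rmult_le_pos.
    + pose proof (w_le j n Hjn). lra.
    + pose proof (pow_cross_le n j g g' Hg Hjn). lra.
  - pose proof (w_lt n j Hnj).
    pose proof (pow_cross_le j n g g' Hg (Nat.lt_le_incl _ _ Hnj)). nra.
Qed.

Lemma geom_weighted_cross_le K g g' : 0 < g <= g' ->
  geom_sum K g' * weighted_sum w K g <= geom_sum K g * weighted_sum w K g'.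
Proof.
  intros Hg. induction K as [|K IH].
  - unfold geom_sum, weighted_sum; simpl. lra.
  - assert (Hstep := geom_weighted_cross_step (S K) K g g').
    assert (0 <= sum_f_R0 (fun j => (w (S K) - w j)
                   * (g' ^ S K * g ^ j - g ^ S K * g' ^ j)) K)
      by (apply cond_pos_sum; intro j; now apply cross_term_nonneg).
    change (geom_sum (S K) g') with (geom_sum K g' + g' ^ S K).
    change (geom_sum (S K) g) with (geom_sum K g + g ^ S K).
    change (weighted_sum w (S K) g') with (weighted_sum w K g' + g' ^ S K * w (S K)).
    change (weighted_sum w (S K) g) with (weighted_sum w K g + g ^ S K * w (S K)).
    nra.
Qed.

Lemma weighted_ratio_succ_lt K g g' : 0 < g <= g' ->
  geom_sum (S K) g' / weighted_sum w (S K) g' < geom_sum K g / weighted_sum w K g.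
Proof.
  intros Hg.
  assert (Hcross := geom_weighted_cross_le K g g' Hg).
  assert (Hnew : weighted_sum w K g < geom_sum K g * w (S K))
    by (apply weighted_sum_lt_geom_sum_mul; [lra | intros k Hk; apply w_lt; lia]).
  assert (HD := weighted_sum_pos K g ltac:(lra)).
  assert (HD' := weighted_sum_pos (S K) g' ltac:(lra)).
  assert (Hb : 0 < g' ^ S K) by (apply pow_lt; lra).
  change (geom_sum (S K) g') with (geom_sum K g' + g' ^ S K) in *.
  change (weighted_sum w (S K) g') with (weighted_sum w K g' + g' ^ S K * w (S K)) in *.
  apply (Rmult_lt_reg_r (weighted_sum w K g * (weighted_sum w K g' + g' ^ S K * w (S K)))).
  { now apply Rmult_lt_0_compat. }
  field_simplify; try lra. nra.
Qed.

End WeightedSums.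

Definition mean_backoff (b0 : nat) (m : R) (k : nat) : R := INR b0 * m ^ k - 1 / 2.

Section Backoff.

Variables (b0 : nat) (m : R).
Hypothesis b0_ge1 : (1 <= b0)%nat.
Hypothesis m_gt1 : 1 < m.

Lemma mean_backoff_ge_half k : 1 / 2 <= mean_backoff b0 m k.
Proof.
  unfold mean_backoff. assert (1 <= INR b0) by (apply (le_INR 1); lia).
  assert (1 <= m ^ k) by (apply pow_R1_Rle; lra). nra.
Qed.

Lemma mean_backoff_pos k : 0 < mean_backoff b0 m k.
Proof. pose proof (mean_backoff_ge_half k). lra. Qed.

Lemma mean_backoff_lt i j : (i < j)%nat -> mean_backoff b0 m i < mean_backoff b0 m j.
Proof.
  intros Hij. unfold mean_backoff. assert (1 <= INR b0) by (apply (le_INR 1); lia).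
  assert (m ^ i < m ^ j) by (apply Rlt_pow; [lra | exact Hij]). nra.
Qed.

Lemma div_q k x : x / q b0 m k = x * mean_backoff b0 m k.
Proof.
  pose proof (mean_backoff_pos k) as Hpos. unfold mean_backoff in *. unfold q.
  field. lra.
Qed.

Lemma pbar_weighted K g : pbar b0 m K g = geom_sum K g / weighted_sum (mean_backoff b0 m) K g.
Proof.
  unfold pbar. f_equal. apply sum_eq. intros k _. apply div_q.
Qed.

Lemma pbar_pos K g : 0 < g -> 0 < pbar b0 m K g.
Proof.
  intros Hg. rewrite pbar_weighted. apply Rdiv_lt_0_compat.
  - now apply geom_sum_pos.
  - apply weighted_sum_pos; [exact mean_backoff_pos | exact Hg].
Qed.

Lemma pbar_succ_lt K g g' : 0 < g <= g' -> pbar b0 m (S K) g' < pbar b0 m K g.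
Proof.
  intros Hg. rewrite !pbar_weighted.
  apply weighted_ratio_succ_lt; [exact mean_backoff_pos | exact mean_backoff_lt | exact Hg].
Qed.

Lemma pbar_le_2 K g : 0 < g -> pbar b0 m K g <= 2.
Proof.
  intros Hg. rewrite pbar_weighted.
  assert (HD := weighted_sum_pos _ mean_backoff_pos K g Hg).
  apply (Rmult_le_reg_r (weighted_sum (mean_backoff b0 m) K g)); [exact HD|].
  unfold Rdiv. rewrite Rmult_assoc, Rinv_l, Rmult_1_r by lra.
  unfold geom_sum, weighted_sum. rewrite scal_sum.
  apply sum_Rle. intros k _. pose proof (mean_backoff_ge_half k).
  assert (0 <= g ^ k) by (apply pow_le; lra). nra.
Qed.

Lemma weighted_sum_ge_linear K g : 1 / m <= g <= 1 ->
  (INR K + 1) / 2 <= weighted_sum (mean_backoff b0 m) K g.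
Proof.
  intros Hg. replace ((INR K + 1) / 2) with (sum_f_R0 (fun _ => 1 / 2) K)
    by (rewrite sum_cte, S_INR; field).
  apply sum_Rle. intros k _. unfold mean_backoff.
  assert (1 <= INR b0) by (apply (le_INR 1); lia).
  assert (0 < 1 / m) by (apply Rdiv_lt_0_compat; lra).
  assert (Hgm : 1 <= g * m).
  { apply (Rmult_le_reg_r (/ m)); [apply Rinv_0_lt_compat; lra|].
    rewrite Rmult_assoc, Rinv_r by lra. lra. }
  assert (1 <= g ^ k * m ^ k) by (rewrite <- Rpow_mult_distr; now apply pow_R1_Rle).
  assert (g ^ k <= 1) by (rewrite <- (pow1 k); apply pow_incr; lra).
  assert (0 <= g ^ k) by (apply pow_le; lra).
  nra.
Qed.

Lemma ex_series_pow_div_q l : 0 <= l < 1 / m -> ex_series (fun k => l ^ k / q b0 m k).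
Proof.
  intros Hl.
  assert (Hlm : l * m < 1).
  { apply (Rmult_lt_reg_r (/ m)); [apply Rinv_0_lt_compat; lra|].
    rewrite Rmult_assoc, Rinv_r by lra. lra. }
  assert (Hl1 : l < 1).
  { assert (1 / m < 1) by (apply (Rmult_lt_reg_r m); [lra|]; field_simplify; lra). lra. }
  apply (ex_series_ext (fun k => plus (scal (INR b0) ((l * m) ^ k)) (opp (scal (1 / 2) (l ^ k))))).
  { intros k. rewrite div_q, Rpow_mult_distr. unfold plus, opp, scal; simpl.
    unfold mult; simpl. unfold mean_backoff. ring. }
  apply (ex_series_minus (fun k => scal (INR b0) ((l * m) ^ k)) (fun k => scal (1 / 2) (l ^ k))).
  - apply (ex_series_scal (INR b0) (fun k => (l * m) ^ k)).
    apply ex_series_geom. rewrite Rabs_pos_eq; nra.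
  - apply (ex_series_scal (1 / 2) (fun k => l ^ k)).
    apply ex_series_geom. rewrite Rabs_pos_eq; lra.
Qed.

End Backoff.

Lemma is_lim_seq_eventually_decr (u : nat -> R) (M : R) (K0 : nat) :
  (forall n, (K0 <= n)%nat -> u (S n) <= u n) -> (forall n, (K0 <= n)%nat -> M <= u n) ->
  exists l : R, is_lim_seq u l /\ M <= l <= u K0.
Proof.
  intros Hdecr Hlow. set (v := fun n => u (n + K0)%nat).
  assert (Hv_decr : forall n, v (S n) <= v n) by (intro n; apply (Hdecr (n + K0)%nat); lia).
  assert (Hv_low : forall n, M <= v n) by (intro n; apply Hlow; lia).
  assert (Hv_top : forall n, v n <= u K0).
  { induction n as [|n IH]; [apply Rle_refl | eapply Rle_trans; [apply Hv_decr | exact IH]]. }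
  destruct (ex_finite_lim_seq_decr v M Hv_decr Hv_low) as [l Hl].
  exists l. split; [now apply (is_lim_seq_incr_n u K0) |].
  split.
  - exact (is_lim_seq_le (fun _ => M) v M l Hv_low (is_lim_seq_const M) Hl).
  - exact (is_lim_seq_le v (fun _ => u K0) l (u K0) Hv_top Hl (is_lim_seq_const _)).
Qed.

Section FixedPoint.

Variables (N b0 : nat) (m : R).
Hypothesis N_ge2 : (2 <= N)%nat.
Hypothesis b0_ge1 : (1 <= b0)%nat.
Hypothesis m_gt1 : 1 < m.

Lemma N_pred_ge1 : 1 <= INR N - 1.
Proof. assert (2 <= INR N) by (apply (le_INR 2); lia). lra. Qed.

Lemma fixed_point_succ_lt K g g' :
  is_fixed_point N b0 m K g -> is_fixed_point N b0 m (S K) g' -> g' < g.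
Proof.
  intros [Hg Hfix] [Hg' Hfix']. destruct (Rlt_or_le g' g) as [Hlt | Hle]; [exact Hlt|].
  assert (Hp := pbar_succ_lt b0 m b0_ge1 m_gt1 K g g' ltac:(lra)).
  pose proof N_pred_ge1.
  assert (exp (- (INR N - 1) * pbar b0 m K g) < exp (- (INR N - 1) * pbar b0 m (S K) g'))
    by (apply exp_increasing; nra).
  lra.
Qed.

Lemma fixed_point_ge_inv_m_bound K g : is_fixed_point N b0 m K g -> 1 / m <= g ->
  g * (INR K + 1) <= 2 * (INR N - 1) * exp (2 * (INR N - 1)).
Proof.
  intros [Hg Hfix] Hgm. pose proof N_pred_ge1.
  set (E := exp (2 * (INR N - 1))).
  set (p := pbar b0 m K g) in Hfix.
  assert (Hp0 : 0 < p) by (apply (pbar_pos b0 m b0_ge1 m_gt1); lra).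
  assert (Hp2 : p <= 2) by (apply (pbar_le_2 b0 m b0_ge1 m_gt1); lra).
  assert (H1g : / E <= 1 - g).
  { unfold E. rewrite <- exp_Ropp.
    assert (Hexp : - (2 * (INR N - 1)) <= - (INR N - 1) * p) by nra.
    destruct (Rle_lt_or_eq_dec _ _ Hexp) as [Hlt | Heq].
    - apply exp_increasing in Hlt. lra.
    - rewrite Heq. lra. }
  assert (HA : geom_sum K g <= E).
  { eapply Rle_trans; [apply geom_sum_le_inv; lra|].
    rewrite <- (Rinv_inv E). apply Rinv_le_contravar; [apply Rinv_0_lt_compat, exp_pos | exact H1g]. }
  assert (HD := weighted_sum_ge_linear b0 m b0_ge1 m_gt1 K g ltac:(lra)).
  assert (Hratio : p * weighted_sum (mean_backoff b0 m) K g = geom_sum K g).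
  { unfold p. rewrite pbar_weighted by assumption. field.
    apply Rgt_not_eq, weighted_sum_pos; [apply mean_backoff_pos; assumption | lra]. }
  assert (Hlin : g <= (INR N - 1) * p) by (pose proof (exp_ineq1_le (- (INR N - 1) * p)); lra).
  assert (0 <= INR K) by apply pos_INR.
  assert (g * (INR K + 1) <= (INR N - 1) * p * (INR K + 1)) by nra.
  nra.
Qed.

Lemma fixed_point_eventually_lt_inv_m : exists K0 : nat, (1 <= K0)%nat /\
  forall K g, (K0 <= K)%nat -> is_fixed_point N b0 m K g -> g < 1 / m.
Proof.
  pose proof N_pred_ge1.
  set (C := 2 * (INR N - 1) * exp (2 * (INR N - 1))).
  assert (HC : 0 < C) by (unfold C; pose proof (exp_pos (2 * (INR N - 1))); nra).
  assert (HmC : 0 < m * C) by nra.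
  destruct (archimed_cor1 (/ (m * C)) ltac:(now apply Rinv_0_lt_compat)) as [K0 [HK0 HK0pos]].
  exists K0. split; [lia|]. intros K g HK Hfix.
  destruct (Rlt_or_le g (1 / m)) as [Hlt | Hge]; [exact Hlt | exfalso].
  assert (Hbound := fixed_point_ge_inv_m_bound K g Hfix Hge). fold C in Hbound.
  assert (HmC_K0 : m * C < INR K0)
    by (apply Rinv_lt_cancel; [apply lt_0_INR |]; assumption).
  assert (INR K0 <= INR K) by (now apply le_INR).
  assert (Hinv : 1 / m * (m * C) = C) by (field; lra).
  assert (0 < 1 / m) by (apply Rdiv_lt_0_compat; lra).
  assert (1 / m * (m * C) < 1 / m * (INR K + 1)) by (apply Rmult_lt_compat_l; lra).
  assert (1 / m * (INR K + 1) <= g * (INR K + 1)) by (apply Rmult_le_compat_r; pose proof (pos_INR K); lra).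
  lra.
Qed.

End FixedPoint.

Theorem lemma1 (N b0 : nat) (m : R) (gamma : nat -> R)
  (HN : (2 <= N)%nat) (Hb0 : (1 <= b0)%nat) (Hm : 1 < m)
  (Hgamma : forall K : nat, (1 <= K)%nat -> is_fixed_point N b0 m K (gamma K)) :
  (exists K0 : nat, (1 <= K0)%nat /\ gamma K0 < 1 / m /\
     forall K : nat, (K0 <= K)%nat -> gamma (S K) < gamma K)
  /\
  (exists K0 : nat, (1 <= K0)%nat /\
     (forall K : nat, (K0 <= K)%nat -> gamma K < 1 / m) /\
     exists ginf : R, is_lim_seq gamma ginf /\ ginf < 1 / m /\
       ex_series (fun k => ginf ^ k / q b0 m k)).
Proof.
  destruct (fixed_point_eventually_lt_inv_m N b0 m HN Hb0 Hm) as [K0 [HK0 Hsmall]].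
  assert (Hsmall' : forall K, (K0 <= K)%nat -> gamma K < 1 / m)
    by (intros K HK; apply (Hsmall K); [exact HK | apply Hgamma; lia]).
  assert (Hdecr : forall K, (K0 <= K)%nat -> gamma (S K) < gamma K)
    by (intros K HK; apply (fixed_point_succ_lt N b0 m HN Hb0 Hm K); apply Hgamma; lia).
  split.
  - exists K0. repeat split; auto.
  - exists K0. repeat split; auto.
    destruct (is_lim_seq_eventually_decr gamma 0 K0) as [ginf [Hlim [Hginf0 HginfK0]]].
    + intros n Hn. now apply Rlt_le, Hdecr.
    + intros n Hn. destruct (Hgamma n ltac:(lia)) as [Hn01 _]. lra.
    + assert (ginf < 1 / m) by (pose proof (Hsmall' K0 (le_n K0)); lra).
      exists ginf. repeat split; auto.
      apply ex_series_pow_div_q; auto.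
Qed.
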